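(* Let $A\in\mathbb{Z}^{d_a\times n}$, $B\in\mathbb{Z}^{d_b\times n}$ and $C\in\mathbb{Z}^{s\times n}$ be fixed. For $N\ge1$ let $([A,B],C)^{(N)}$ be the matrix with $Nn+Ns$ columns $$\begin{pmatrix} B & B & \cdots & B & & & & \\ A & & & & & & & \\ & A & & & & & & \\ & & \ddots & & & & & \\ & & & A & & & & \\ C & & & & I_s & & & \\ & C & & & & I_s & & \\ & & \ddots & & & & \ddots & \\ & & & C & & & & I_s\end{pmatrix}$$ (blank entries are zero). Then the encoding length of the Graver basis of $([A,B],C)^{(N)}$ increases only polynomially in $N$.
   Context: For an integer matrix $M$ with $k$ columns and each closed orthant $\mathbb{O}_j$ of $\mathbb{R}^k$, let $H_j$ be the unique minimal set of integer vectors generating $\{z\in\mathbb{O}_j: Mz=0\}\cap\mathbb{Z}^k$ over $\mathbb{Z}_+$. The Graver basis of $M$ is $\bigcup_j H_j\setminus\{0\}$. *)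

From HB Require Import structures.
From mathcomp Require Import all_boot all_order all_algebra.
Set Implicit Arguments. Unset Strict Implicit. Unset Printing Implicit Defensive.
Import Order.TTheory GRing.Theory Num.Theory.
Local Open Scope ring_scope.

Definition in_orthant (k : nat) (sigma : 'I_k -> bool) (z : 'cV[int]_k) : Prop :=
  forall i : 'I_k, if sigma i then 0 <= z i ord0 else z i ord0 <= 0.

Definition orth_kernel (m k : nat) (M : 'M[int]_(m, k)) (sigma : 'I_k -> bool)
  (z : 'cV[int]_k) : Prop :=
  in_orthant sigma z /\ M *m z = 0.

Definition Zplus_gen (k : nat) (H : 'cV[int]_k -> Prop) (z : 'cV[int]_k) : Prop :=
  exists l : seq 'cV[int]_k, (forall h, h \in l -> H h) /\ z = \sum_(h <- l) h.

Definition generates (k : nat) (H S : 'cV[int]_k -> Prop) : Prop :=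
  forall z, Zplus_gen H z <-> S z.

Definition minimal_generating (k : nat) (H S : 'cV[int]_k -> Prop) : Prop :=
  generates H S /\
  forall H' : 'cV[int]_k -> Prop, (forall z, H' z -> H z) -> generates H' S ->
    forall z, H z -> H' z.

Definition graver (m k : nat) (M : 'M[int]_(m, k)) (z : 'cV[int]_k) : Prop :=
  z != 0 /\
  exists (sigma : 'I_k -> bool) (H : 'cV[int]_k -> Prop),
    minimal_generating H (orth_kernel M sigma) /\ H z.

(* Entry of a matrix accessed with natural-number indices (0 out of range). *)
Definition ent (m k : nat) (M : 'M[int]_(m, k)) (i j : nat) : int :=
  match insub i, insub j with
  | Some i', Some j' => M i' j'
  | _, _ => 0
  end.

(* Rows: d_b rows of [B ... B | 0], then
   N blocks of d_a rows (block-diagonal A), then N blocks of s rows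
   (block-diagonal C | block-diagonal I_s).  Columns: N*n then N*s. *)
Definition bigentry (da db s n : nat) (A : 'M[int]_(da, n)) (B : 'M[int]_(db, n))
  (C : 'M[int]_(s, n)) (N : nat) (r c : nat) : int :=
  if (r < db)%N then
    (if (c < N * n)%N then ent B r (c %% n) else 0)
  else
    let r1 := (r - db)%N in
    if (r1 < N * da)%N then
      (if (c < N * n)%N && (c %/ n == r1 %/ da)%N then ent A (r1 %% da) (c %% n) else 0)
    else
      let r2 := (r1 - N * da)%N in
      if (c < N * n)%N then
        (if (c %/ n == r2 %/ s)%N then ent C (r2 %% s) (c %% n) else 0)
      else (if (c - N * n == r2)%N then 1 else 0).

Definition bigmx (da db s n : nat) (A : 'M[int]_(da, n)) (B : 'M[int]_(db, n))
  (C : 'M[int]_(s, n)) (N : nat) : 'M[int]_(db + N * da + N * s, N * n + N * s) :=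
  \matrix_(i, j) bigentry A B C N i j.

(* Binary encoding length of an integer: 1 (sign) + ceil(log2(|a|+1)). *)
Definition enc_int (a : int) : nat := (1 + up_log 2 (`|a|%N).+1)%N.

Definition enc_vec (k : nat) (z : 'cV[int]_k) : nat := (\sum_(i < k) enc_int (z i ord0))%N.

From HB Require Import structures.
From mathcomp Require Import all_boot all_order all_algebra zify.
From Stdlib Require Import Classical ClassicalEpsilon.
Import Order.TTheory GRing.Theory Num.Theory.
Set Implicit Arguments. Unset Strict Implicit. Unset Printing Implicit Defensive.

(* The kernel of ([A,B],C)^(N) consists of the vectors whose N bricks (x_i; y_i) lie in the
   kernel of D = (A 0; C I_s) and whose images under (B 0) sum to zero.  Graver bases are
   the conformally minimal nonzero kernel elements, and they are finite by Dickson's lemma.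
   Decompose each brick of a Graver element z of the big matrix conformally into elements of
   the Graver basis G(D).  The vector of multiplicities of these summands is then a Graver
   element of (B 0) G(D): a smaller conformal multiplicity vector in that kernel would select
   a proper conformal sub-sum of z lying in the kernel of the big matrix.  So z is a sum of at
   most g summands, with g independent of N, each placed in one of the N bricks; this leaves
   at most (N (|G(D)| + 1))^g candidates, each of encoding length O(N). *)

(** * Dickson's lemma *)

Definition finite_pred (T : eqType) (P : T -> Prop) :=
  exists l : seq T, forall x, P x -> x \in l.

Lemma finite_pred_bigcup (I T : eqType) (r : seq I) (P : I -> T -> Prop) :
  (forall i, i \in r -> finite_pred (P i)) ->
  finite_pred (fun x => exists2 i, i \in r & P i x).
Proof.
elim: r => [|i r IHr] finP; first by exists [::] => x [].
have [l1 Hl1] := finP i (mem_head i r).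
have [l2 Hl2] : finite_pred (fun x => exists2 j, j \in r & P j x).
  by apply: IHr => j jr; apply: finP; rewrite inE jr orbT.
exists (l1 ++ l2) => x [j]; rewrite inE mem_cat => /orP [/eqP -> /Hl1 -> //|jr Pjx].
by rewrite (Hl2 x) ?orbT //; exists j.
Qed.

Lemma finite_pred_uniq (T : eqType) (P : T -> Prop) :
  finite_pred P -> exists2 l : seq T, uniq l & forall x, P x -> x \in l.
Proof. by move=> [l Hl]; exists (undup l) => [|x /Hl]; rewrite ?undup_uniq ?mem_undup. Qed.

Section Dickson.
Variable k : nat.
Implicit Types (j : 'I_k.+1) (f : {ffun 'I_k.+1 -> nat}) (h : {ffun 'I_k -> nat}).

Definition ffun_drop j f : {ffun 'I_k -> nat} := [ffun t => f (lift j t)].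

Definition ffun_ins j (v : nat) h : {ffun 'I_k.+1 -> nat} :=
  [ffun t => if unlift j t is Some t' then h t' else v].

Lemma ffun_dropK j f : ffun_ins j (f j) (ffun_drop j f) = f.
Proof. by apply/ffunP => t; rewrite !ffunE; case: unliftP => [t' ->|->]; rewrite ?ffunE. Qed.

Lemma ffun_drop_le j f1 f2 : f1 j = f2 j ->
  (forall t, f1 (lift j t) <= f2 (lift j t))%N -> forall t, (f1 t <= f2 t)%N.
Proof. by move=> e le t; case: (unliftP j t) => [t' ->|->]; rewrite ?e. Qed.

End Dickson.

Lemma dickson k (P : {ffun 'I_k -> nat} -> Prop) :
  (forall f g, P f -> P g -> (forall i, f i <= g i)%N -> f = g) -> finite_pred P.
Proof.
elim: k P => [|k IHk] P antichain.
  by exists [:: [ffun=> 0%N]] => f _; rewrite inE; apply/eqP/ffunP => -[[]].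
case: (classic (exists a, P a)) => [[a Pa]|noP]; last first.
  by exists [::] => f Pf; exfalso; apply: noP; exists f.
pose fixed (jv : 'I_k.+1 * nat) f := P f /\ f jv.1 = jv.2.
have fin_fixed jv : finite_pred (fixed jv).
  have [l Hl] : finite_pred (fun h => exists2 f, fixed jv f & h = ffun_drop jv.1 f).
    apply: IHk => _ _ [f1 [P1 e1] ->] [f2 [P2 e2] ->] le.
    rewrite (antichain f1 f2) //; apply: (ffun_drop_le (j := jv.1)); first by rewrite e1 e2.
    by move=> t; have := le t; rewrite !ffunE.
  exists (map (ffun_ins jv.1 jv.2) l) => f [Pf fj].
  by rewrite -(ffun_dropK jv.1 f) fj map_f // Hl //; exists f.
(* An f in P other than a is not above a, so f j < a j for some j. *)
pose below := [seq (j, v) | j <- enum 'I_k.+1, v <- iota 0 (a j)].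
have [l Hl] := finite_pred_bigcup (r := below) (fun jv _ => fin_fixed jv).
exists (a :: l) => f Pf; rewrite inE.
case: (boolP [forall j, a j <= f j]%N) => [/forallP le|].
  by rewrite (antichain a f) ?eqxx.
rewrite negb_forall => /existsP [j]; rewrite -ltnNge => lt.
rewrite Hl ?orbT //; exists (j, f j) => //.
by rewrite /below; apply/allpairsPdep; exists j, (f j); rewrite mem_enum mem_iota.
Qed.

(** * Conformal order and Graver bases *)

Local Open Scope ring_scope.

Definition conf (a b : int) : bool := (0 <= a <= b) || (b <= a <= 0).

Lemma conf_refl a : conf a a. Proof. rewrite /conf; lia. Qed.
Lemma conf_trans a b c : conf a b -> conf b c -> conf a c. Proof. rewrite /conf; lia. Qed.
Lemma confB a b : conf a b -> conf (b - a) b. Proof. rewrite /conf; lia. Qed.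
Lemma conf_abs a b : conf a b -> (`|a| <= `|b|)%N. Proof. rewrite /conf; lia. Qed.
Lemma conf_abs_inj a b : conf a b -> `|a|%N = `|b|%N -> a = b. Proof. rewrite /conf; lia. Qed.
Lemma confr0 a : conf a 0 -> a = 0. Proof. rewrite /conf; lia. Qed.

Section ConformalOrder.
Variable k : nat.
Implicit Types (u v w : 'cV[int]_k) (sigma : 'I_k -> bool).

Definition confv u w := forall i, conf (u i ord0) (w i ord0).

Definition norm1 w : nat := (\sum_i `|w i ord0|)%N.

Lemma confv_refl w : confv w w. Proof. by move=> i; apply: conf_refl. Qed.

Lemma confv0l w : confv 0 w.
Proof. by move=> i; rewrite mxE /conf; lia. Qed.

Lemma confv_trans u v w : confv u v -> confv v w -> confv u w.
Proof. by move=> uv vw i; apply: conf_trans (uv i) (vw i). Qed.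

Lemma confvB u w : confv u w -> confv (w - u) w.
Proof. by move=> uw i; rewrite !mxE; apply: confB. Qed.

Lemma confvr0 u : confv u 0 -> u = 0.
Proof.
by move=> u0; apply/matrixP => i j; rewrite ord1 mxE; apply: confr0; have := u0 i; rewrite mxE.
Qed.

Lemma norm1_conf u w : confv u w -> (norm1 u <= norm1 w)%N.
Proof. by move=> uw; apply: leq_sum => i _; apply: conf_abs. Qed.

Lemma norm1_conf_lt u w : confv u w -> u != w -> (norm1 u < norm1 w)%N.
Proof.
move=> uw; apply: contraNT; rewrite -leqNgt => le.
have /leqif_sum abs_eq : forall i : 'I_k, true -> (`|u i ord0| <= `|w i ord0| ?= iff
    (`|u i ord0| == `|w i ord0|))%N by move=> i _; apply/leqif_eq/conf_abs.
have /forall_inP eq_abs : [forall (i | true), `|u i ord0| == `|w i ord0|]%N.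
  by rewrite -abs_eq eqn_leq le norm1_conf.
by apply/eqP/matrixP => i j; rewrite ord1; apply: conf_abs_inj (uw i) (eqP (eq_abs i _)).
Qed.

Lemma in_orthant_sign w : in_orthant (fun i => 0 <= w i ord0) w.
Proof. by move=> i; case: ifP => // /negbT; rewrite -ltNge => /ltW. Qed.

Lemma in_orthant_conf sigma u w : in_orthant sigma w -> confv u w -> in_orthant sigma u.
Proof. by move=> Ow uw i; have := Ow i; have := uw i; rewrite /conf; case: (sigma i); lia. Qed.

Lemma in_orthantD sigma u v : in_orthant sigma u -> in_orthant sigma v -> in_orthant sigma (u + v).
Proof.
move=> Ou Ov i; have := Ou i; have := Ov i; rewrite mxE.
by case: (sigma i); move: (u i ord0) (v i ord0) => a b; lia.
Qed.

Lemma in_orthant_sum sigma (I : eqType) (r : seq I) (F : I -> 'cV[int]_k) :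
  (forall i, i \in r -> in_orthant sigma (F i)) -> in_orthant sigma (\sum_(i <- r) F i).
Proof.
move=> Or; rewrite big_seq; apply: big_ind => //; last exact: in_orthantD.
by move=> i; rewrite mxE; case: (sigma i).
Qed.

Lemma confv_addr sigma u v : in_orthant sigma u -> in_orthant sigma v -> confv u (u + v).
Proof.
move=> Ou Ov i; have := Ou i; have := Ov i; rewrite mxE /conf.
by case: (sigma i); move: (u i ord0) (v i ord0) => a b; lia.
Qed.

Lemma confv_sum_mem sigma (I : eqType) (r : seq I) (F : I -> 'cV[int]_k) i :
  (forall j, j \in r -> in_orthant sigma (F j)) -> i \in r -> confv (F i) (\sum_(j <- r) F j).
Proof.
move=> Or ir; rewrite (big_rem _ ir) /=; apply: confv_addr (Or i ir) _.
by apply: in_orthant_sum => j /mem_rem; apply: Or.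
Qed.

Lemma sum_orthant_neq0 sigma (I : eqType) (r : seq I) (F : I -> 'cV[int]_k) i :
  (forall j, j \in r -> in_orthant sigma (F j)) -> i \in r -> F i != 0 ->
  \sum_(j <- r) F j != 0.
Proof.
move=> Or ir; apply: contraNneq => r0; apply/eqP/confvr0.
by rewrite -r0; apply: confv_sum_mem Or ir.
Qed.

Definition conf_minimal (m : nat) (M : 'M[int]_(m, k)) w :=
  [/\ w != 0, M *m w = 0 & forall u, M *m u = 0 -> u != 0 -> confv u w -> u = w].

End ConformalOrder.

Section GraverBasis.
Variables (m k : nat) (M : 'M[int]_(m, k)).
Implicit Types (u w z : 'cV[int]_k) (H S : 'cV[int]_k -> Prop).

Lemma conf_decomposition w : M *m w = 0 ->
  exists2 l : seq 'cV[int]_k, (forall x, x \in l -> conf_minimal M x /\ confv x w)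
    & w = \sum_(x <- l) x.
Proof.
have [n] := ubnP (norm1 w); elim: n w => // n IHn w; rewrite ltnS => wn Mw.
have [wmin|wnotmin] := classic (conf_minimal M w).
  exists [:: w]; last by rewrite big_seq1.
  by move=> x; rewrite inE => /eqP ->; split; last exact: confv_refl.
have [->|w0] := eqVneq w 0; first by exists [::]; rewrite ?big_nil.
have [u [Mu u0 uw uw_neq]] : exists u, [/\ M *m u = 0, u != 0, confv u w & u != w].
  apply: NNPP => nou; apply: wnotmin; split => // u Mu u0 uw.
  by apply: NNPP => /eqP uw_neq; apply: nou; exists u.
have wuw : confv (w - u) w by apply: confvB.
have wu_neq : w - u != w by rewrite -subr_eq0 addrC addKr oppr_eq0.
have [lu Hlu Eu] := IHn u (leq_trans (norm1_conf_lt uw uw_neq) wn) Mu.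
have Mwu : M *m (w - u) = 0 by rewrite mulmxBr Mw Mu subr0.
have [lv Hlv Ev] := IHn (w - u) (leq_trans (norm1_conf_lt wuw wu_neq) wn) Mwu.
exists (lu ++ lv); last by rewrite big_cat /= -Eu -Ev addrCA subrr addr0.
move=> x; rewrite mem_cat => /orP [/Hlu|/Hlv] [xmin xw]; split => //.
  exact: confv_trans uw.
exact: confv_trans wuw.
Qed.

Lemma generates_remove H S z l : generates H S ->
  (forall x, x \in l -> H x /\ x <> z) -> z = \sum_(x <- l) x ->
  generates (fun x => H x /\ x <> z) S.
Proof.
move=> gen Hl Ez y; split=> [[l' [Hl' ->]]|/gen [l' [Hl' ->]]].
  by apply/gen; exists l'; split => // x /Hl' [].
exists (flatten [seq if x == z then l else [:: x] | x <- l']); split.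
  move=> x /flattenP [r /mapP [x' x'l' ->]].
  by case: eqP => [_ /Hl //|ne]; rewrite inE => /eqP ->; split => //; apply: Hl'.
rewrite big_flatten /= big_map; apply: eq_bigr => x _.
by case: eqP => [->|_]; rewrite ?big_seq1.
Qed.

(* A kernel element u ⊑ z other than z splits z = u + (z - u) into generators of smaller norm,
   so the generating set stays generating without z, against minimality. *)
Lemma graver_conf_minimal z : graver M z -> conf_minimal M z.
Proof.
move=> [z0 [sigma [H [[gen Hmin] Hz]]]].
have HS x : H x -> orth_kernel M sigma x.
  move=> Hx; apply/gen; exists [:: x]; rewrite big_seq1.
  by split => // y; rewrite inE => /eqP ->.
have [Oz Mz] := HS z Hz.
split => // u Mu u0 uz; apply: NNPP => /eqP uz_neq.
have summands_ne v : orth_kernel M sigma v -> (norm1 v < norm1 z)%N ->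
    exists2 l, (forall x, x \in l -> H x /\ x <> z) & v = \sum_(x <- l) x.
  move=> /gen [l [Hl ->]] lt; exists l => // x xl; split; first exact: Hl.
  move=> xz; move: lt; rewrite -xz ltnNge norm1_conf //.
  by apply: (confv_sum_mem (sigma := sigma)) => // y /Hl /HS [].
have zuz : confv (z - u) z := confvB uz.
have zu_neq : z - u != z by rewrite -subr_eq0 addrC addKr oppr_eq0.
have Mzu : M *m (z - u) = 0 by rewrite mulmxBr Mz Mu subr0.
have [lu Hlu Eu] := summands_ne u (conj (in_orthant_conf Oz uz) Mu) (norm1_conf_lt uz uz_neq).
have [lv Hlv Ev] :=
  summands_ne (z - u) (conj (in_orthant_conf Oz zuz) Mzu) (norm1_conf_lt zuz zu_neq).
have gen' : generates (fun x => H x /\ x <> z) (orth_kernel M sigma).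
  apply: (generates_remove (l := lu ++ lv)) => //.
    by move=> x; rewrite mem_cat => /orP [/Hlu|/Hlv].
  by rewrite big_cat /= -Eu -Ev addrCA subrr addr0.
by have [] := Hmin _ (fun x (Hx : H x /\ x <> z) => Hx.1) gen' z Hz.
Qed.

Lemma conf_minimal_graver z : conf_minimal M z -> graver M z.
Proof.
move=> zmin; have [z0 Mz _] := zmin.
pose sigma i := 0 <= z i ord0.
pose H x := in_orthant sigma x /\ conf_minimal M x.
split => //; exists sigma, H; split; last by split => //; apply: in_orthant_sign.
split.
  move=> y; split => [[l [Hl ->]]|[Oy My]].
    split; first by apply: in_orthant_sum => x /Hl [].
    by rewrite mulmx_sumr big_seq big1 // => x /Hl [_ []].
  have [l Hl ->] := conf_decomposition My.
  by exists l; split => // x /Hl [xmin xy]; split => //; apply: in_orthant_conf Oy xy.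
move=> H' H'H gen' x [Ox [x0 Mx xmin]].
have [[|e l] [Hl Ex]] := (gen' x).2 (conj Ox Mx).
  by move: x0; rewrite Ex big_nil eqxx.
have [Oe [e0 Me _]] := H'H e (Hl e (mem_head e l)).
suff <- : e = x by apply: Hl; rewrite mem_head.
apply: xmin => //; rewrite Ex; apply: (confv_sum_mem (sigma := sigma)) (mem_head e l).
by move=> y /Hl /H'H [].
Qed.

Lemma graverP z : graver M z <-> conf_minimal M z.
Proof. by split; [apply: graver_conf_minimal | apply: conf_minimal_graver]. Qed.

Lemma conf_minimal_finite : finite_pred (conf_minimal M).
Proof.
(* Positive parts, then negative parts: [enc u <= enc w] pointwise forces u ⊑ w. *)
pose enc w : {ffun 'I_(k + k) -> nat} := [ffun t => match split t with
  | inl i => if 0 <= w i ord0 then `|w i ord0|%N else 0%N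
  | inr i => if w i ord0 < 0 then `|w i ord0|%N else 0%N end].
pose dec (f : {ffun 'I_(k + k) -> nat}) : 'cV[int]_k :=
  \col_i ((f (unsplit (inl i)))%:Z - (f (unsplit (inr i)))%:Z).
have encK : cancel enc dec.
  move=> w; apply/matrixP => i j; rewrite ord1 !mxE !ffunE !unsplitK.
  by move: (w i ord0) => a; case: ifP; case: ifP; lia.
have enc_le u w : (forall t, enc u t <= enc w t)%N -> confv u w.
  move=> le i; have := le (unsplit (inl i)); have := le (unsplit (inr i)).
  rewrite !ffunE !unsplitK /conf; move: (u i ord0) (w i ord0) => a b.
  by case: ifP; case: ifP; case: ifP; case: ifP; lia.
have [l Hl] : finite_pred (fun f => exists2 w, conf_minimal M w & f = enc w).
  apply: dickson => _ _ [u [u0 Mu _] ->] [w [_ _ wmin] ->] le.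
  by rewrite (wmin u Mu u0 (enc_le u w le)).
by exists (map dec l) => w wmin; rewrite -(encK w) map_f // Hl //; exists w.
Qed.

End GraverBasis.

(** * Block structure of ([A,B],C)^(N) *)

Definition vat p (v : 'cV[int]_p) (j : nat) : int := ent v j 0.

Lemma entE a b (M : 'M[int]_(a, b)) (i : 'I_a) (j : 'I_b) : ent M i j = M i j.
Proof. by rewrite /ent !valK. Qed.

Lemma entNr a b (M : 'M[int]_(a, b)) i j : (a <= i)%N -> ent M i j = 0.
Proof. by move=> h; rewrite /ent insubN // -leqNgt. Qed.

Section VectorAt.
Variable p : nat.
Implicit Types u v w : 'cV[int]_p.

Lemma vatE w (j : 'I_p) : vat w j = w j ord0.
Proof. exact: (entE w j ord0). Qed.

Lemma vatN w j : (p <= j)%N -> vat w j = 0.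
Proof. exact: entNr. Qed.

Lemma vat_eq u v : (forall j, (j < p)%N -> vat u j = vat v j) -> u = v.
Proof. by move=> uv; apply/matrixP => i j; rewrite ord1 -!vatE; apply: uv. Qed.

Lemma vat0 j : vat (0 : 'cV[int]_p) j = 0.
Proof. by case: (ltnP j p) => jp; [rewrite (vatE _ (Ordinal jp)) mxE | rewrite vatN]. Qed.

Lemma vatD u v j : vat (u + v) j = vat u j + vat v j.
Proof.
by case: (ltnP j p) => jp; [rewrite !(vatE _ (Ordinal jp)) mxE | rewrite !vatN ?addr0].
Qed.

Lemma vat_sum I (r : seq I) (P : pred I) (F : I -> 'cV[int]_p) j :
  vat (\sum_(x <- r | P x) F x) j = \sum_(x <- r | P x) vat (F x) j.
Proof.
by elim: r => [|x r IHr]; rewrite ?big_nil ?vat0 // !big_cons; case: (P x); rewrite ?vatD IHr.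
Qed.

Lemma confv_vat u w j : confv u w -> conf (vat u j) (vat w j).
Proof.
move=> uw; case: (ltnP j p) => jp; last by rewrite !vatN.
by rewrite !(vatE _ (Ordinal jp)).
Qed.

End VectorAt.

Lemma vat_mulmx m p (M : 'M[int]_(m, p)) (w : 'cV[int]_p) r :
  vat (M *m w) r = \sum_(0 <= j < p) ent M r j * vat w j.
Proof.
case: (ltnP r m) => rm; last by rewrite vatN // big1 // => j _; rewrite entNr // mul0r.
rewrite (vatE _ (Ordinal rm)) mxE big_mkord.
by apply: eq_bigr => j _; rewrite (entE M (Ordinal rm)) vatE.
Qed.

Section NatSums.
Variable V : nmodType.
Implicit Type F : nat -> V.

Lemma big_nat_split F a b :
  \sum_(0 <= c < a + b) F c = \sum_(0 <= c < a) F c + \sum_(0 <= c < b) F (a + c)%N.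
Proof.
rewrite (@big_cat_nat _ _ _ a) //=; last by rewrite leq_addr.
congr (_ + _); rewrite -{1}(add0n a) big_addn addKn.
by apply: eq_bigr => i _; rewrite addnC.
Qed.

Lemma big_nat_blocks F N n :
  \sum_(0 <= c < N * n) F c = \sum_(0 <= i < N) \sum_(0 <= j < n) F (i * n + j)%N.
Proof.
elim: N => [|N IHN]; first by rewrite mul0n !big_geq.
by rewrite mulSnr big_nat_split IHN big_nat_recr.
Qed.

Lemma big_nat_delta F x b : (x < b)%N ->
  \sum_(0 <= c < b) (if c == x then F c else 0) = F x.
Proof. by move=> xb; rewrite -big_mkcond big_nat1_eq /= xb. Qed.

End NatSums.

Lemma block_index m i j : (j < m)%N -> ((i * m + j) %/ m = i)%N * ((i * m + j) %% m = j)%N.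
Proof. by move=> jm; rewrite divnMDl ?divn_small ?addn0 ?modnMDl ?modn_small //; lia. Qed.

Lemma block_index_lt N m i j : (i < N)%N -> (j < m)%N -> (i * m + j < N * m)%N.
Proof. by move=> iN jm; nia. Qed.

Section Blocks.
Variables n s N : nat.
Local Notation k := (N * n + N * s)%N.
Local Notation vec := 'cV[int]_(n + s).
Implicit Types (z : 'cV[int]_k) (x : vec) (f : nat -> vec).
Local Open Scope nat_scope.

(* [block z i] is the i-th brick (x_i; y_i) of z: the x-parts fill the first N * n
   coordinates and the y-parts the last N * s. *)
Definition blockx z i : 'cV[int]_n := \col_(j < n) vat z (i * n + j).
Definition blocky z i : 'cV[int]_s := \col_(t < s) vat z (N * n + i * s + t).
Definition block z i : vec := col_mx (blockx z i) (blocky z i).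

Definition unblock f : 'cV[int]_k :=
  \col_c (if c < N * n then vat (f (c %/ n)) (c %% n)
          else vat (f ((c - N * n) %/ s)) (n + (c - N * n) %% s)).

Definition inblock i x : 'cV[int]_k := unblock (fun j => if i == j then x else 0%R).

Lemma vat_blockx z i j : j < n -> vat (blockx z i) j = vat z (i * n + j).
Proof. by move=> jn; rewrite (vatE _ (Ordinal jn)) mxE. Qed.

Lemma vat_blocky z i t : t < s -> vat (blocky z i) t = vat z (N * n + i * s + t).
Proof. by move=> ts; rewrite (vatE _ (Ordinal ts)) mxE. Qed.

Lemma vat_block_lo z i j : j < n -> vat (block z i) j = vat z (i * n + j).
Proof.
move=> jn; have jns : j < n + s by rewrite ltn_addr.
rewrite (vatE _ (Ordinal jns)).
have -> : Ordinal jns = lshift s (Ordinal jn) by apply: val_inj.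
by rewrite col_mxEu mxE.
Qed.

Lemma vat_block_hi z i t : t < s -> vat (block z i) (n + t) = vat z (N * n + i * s + t).
Proof.
move=> ts; have tns : n + t < n + s by rewrite ltn_add2l.
rewrite (vatE _ (Ordinal tns)).
have -> : Ordinal tns = rshift n (Ordinal ts) by apply: val_inj.
by rewrite col_mxEd mxE.
Qed.

Lemma vat_unblock_lo f c : c < N * n -> vat (unblock f) c = vat (f (c %/ n)) (c %% n).
Proof.
move=> cN; have ck : c < k by lia.
by rewrite (vatE _ (Ordinal ck)) mxE /= cN.
Qed.

Lemma vat_unblock_hi f c : c < N * s ->
  vat (unblock f) (N * n + c) = vat (f (c %/ s)) (n + c %% s).
Proof.
move=> cN; have ck : N * n + c < k by lia.
by rewrite (vatE _ (Ordinal ck)) mxE /= ifN -?leqNgt ?leq_addr // addKn.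
Qed.

Lemma blockK f i : i < N -> block (unblock f) i = f i.
Proof.
move=> iN; apply: vat_eq => j jns; case: (ltnP j n) => [jn|nj].
  by rewrite vat_block_lo // vat_unblock_lo ?block_index_lt ?block_index.
have tN : j - n < s by lia.
rewrite -(subnKC nj) vat_block_hi // -addnA vat_unblock_hi ?block_index_lt //.
by rewrite !block_index.
Qed.

Lemma unblockK z : unblock (block z) = z.
Proof.
apply: vat_eq => c ck; case: (ltnP c (N * n)) => [cN|Nc].
  by rewrite vat_unblock_lo // vat_block_lo ?ltn_mod -?divn_eq //; nia.
rewrite -(subnKC Nc) vat_unblock_hi; last by lia.
by rewrite vat_block_hi ?ltn_mod -?addnA -?divn_eq //; nia.
Qed.

Lemma eq_unblock f g : (forall i, i < N -> f i = g i) -> unblock f = unblock g.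
Proof.
move=> fg; apply/matrixP => c j; rewrite !mxE; case: ifP => cN; rewrite fg //; first by nia.
by have := ltn_ord c; nia.
Qed.

Lemma unblockD f g : unblock (fun i => f i + g i)%R = (unblock f + unblock g)%R.
Proof. by apply/matrixP => c j; rewrite !mxE; case: ifP => _; rewrite vatD. Qed.

Lemma unblock0 : unblock (fun=> 0%R) = 0%R.
Proof. by apply/matrixP => c j; rewrite !mxE; case: ifP => _; rewrite vat0. Qed.

Lemma unblock_sum I (r : seq I) (F : I -> nat -> vec) :
  unblock (fun i => \sum_(x <- r) F x i)%R = (\sum_(x <- r) unblock (F x))%R.
Proof.
elim: r => [|x r IHr].
  by rewrite big_nil -unblock0; apply: eq_unblock => i _; rewrite big_nil.
by rewrite big_cons -IHr -unblockD; apply: eq_unblock => i _; rewrite big_cons.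
Qed.

Lemma block_inblock i j x : j < N -> block (inblock i x) j = if i == j then x else 0%R.
Proof. exact: blockK. Qed.

Lemma inblock_sum i (r : seq vec) : inblock i (\sum_(x <- r) x)%R = (\sum_(x <- r) inblock i x)%R.
Proof.
rewrite /inblock -unblock_sum; apply: eq_unblock => j _.
by case: eqP => _; rewrite // big1.
Qed.

Lemma inblock0 i : inblock i 0%R = 0%R.
Proof. by rewrite -unblock0; apply: eq_unblock => j _; case: eqP. Qed.

Lemma block0 i : i < N -> block 0%R i = 0%R.
Proof. by move=> iN; rewrite -unblock0 blockK. Qed.

Lemma sum_inblock z : z = (\sum_(0 <= i < N) inblock i (block z i))%R.
Proof.
rewrite -unblock_sum -{1}(unblockK z); apply: eq_unblock => j jN.
by rewrite big_nat_delta.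
Qed.

Lemma confv_unblock f z : (forall i, i < N -> confv (f i) (block z i)) -> confv (unblock f) z.
Proof.
move=> fz; rewrite -(unblockK z) => c; rewrite !mxE.
by case: ifP => cN; apply: confv_vat; apply: fz; [nia | have := ltn_ord c; nia].
Qed.

End Blocks.

Section BigMatrix.
Variables (da db s n : nat) (A : 'M[int]_(da, n)) (B : 'M[int]_(db, n))
  (C : 'M[int]_(s, n)) (N : nat).
Local Notation k := (N * n + N * s)%N.
Local Notation BM := (bigmx A B C N).
Local Notation BE := (bigentry A B C N).
Implicit Type z : 'cV[int]_k.
Local Open Scope nat_scope.

Lemma vat_bigmx z r : r < db + N * da + N * s ->
  vat (BM *m z) r = (\sum_(0 <= c < k) BE r c * vat z c)%R.
Proof.
move=> rr; rewrite vat_mulmx; apply: eq_big_nat => c ck.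
by rewrite (entE _ (Ordinal rr) (Ordinal ck)) mxE.
Qed.

Lemma vat_bigmx_top z r : r < db ->
  vat (BM *m z) r = vat (\sum_(0 <= i < N) B *m blockx z i)%R r.
Proof.
move=> rdb; rewrite vat_bigmx; last by lia.
rewrite vat_sum big_nat_split [X in (_ + X)%R]big1 ?addr0; last first.
  by move=> c _; rewrite /bigentry rdb ifN ?mul0r //; lia.
rewrite big_nat_blocks; apply: eq_big_nat => i /andP [_ iN]; rewrite vat_mulmx.
apply: eq_big_nat => j /andP [_ jn]; rewrite vat_blockx // /bigentry rdb !block_index //.
by rewrite block_index_lt.
Qed.

Lemma vat_bigmx_A z x : x < N * da ->
  vat (BM *m z) (db + x) = vat (A *m blockx z (x %/ da)) (x %% da).
Proof.
move=> xN; have notB : (db + x < db) = false by lia.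
have xdaN : x %/ da < N by rewrite ltn_divLR; nia.
rewrite vat_bigmx; last by lia.
rewrite big_nat_split [X in (_ + X)%R]big1 ?addr0; last first.
  by move=> c _; rewrite /bigentry notB addKn xN ifN ?mul0r //; lia.
rewrite big_nat_blocks vat_mulmx.
rewrite -(big_nat_delta (fun i => \sum_(0%N <= j < n) ent A (x %% da) j * vat (blockx z i) j)%R
  xdaN).
apply: eq_big_nat => i /andP [_ iN]; case: eqP => [->|ne].
  apply: eq_big_nat => j /andP [_ jn].
  rewrite vat_blockx // /bigentry notB addKn xN !block_index //.
  by rewrite eqxx andbT block_index_lt.
apply: big1_seq => j; rewrite mem_index_iota => /andP [_ jn].
by rewrite /bigentry notB addKn xN !block_index //; case: eqP; rewrite ?andbF ?mul0r.
Qed.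

Lemma vat_bigmx_C z y : y < N * s ->
  vat (BM *m z) (db + N * da + y) = vat (C *m blockx z (y %/ s) + blocky z (y %/ s)) (y %% s).
Proof.
move=> yN; have notB : (db + N * da + y < db) = false by lia.
have notA : (db + N * da + y - db < N * da) = false by lia.
have rowC : db + N * da + y - db - N * da = y by lia.
have ysN : y %/ s < N by rewrite ltn_divLR; nia.
have ys : y %% s < s by rewrite ltn_mod; nia.
rewrite vat_bigmx; last by lia.
rewrite vatD vat_blocky // -[_ + y %% s]addnA -divn_eq big_nat_split; congr (_ + _)%R.
  rewrite big_nat_blocks vat_mulmx.
  rewrite -(big_nat_delta (fun i => \sum_(0%N <= j < n) ent C (y %% s) j * vat (blockx z i) j)%R
    ysN).
  apply: eq_big_nat => i /andP [_ iN]; case: eqP => [->|ne].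
    apply: eq_big_nat => j /andP [_ jn].
    by rewrite vat_blockx // /bigentry notB notA rowC block_index_lt // !block_index // eqxx.
  apply: big1_seq => j; rewrite mem_index_iota => /andP [_ jn].
  by rewrite /bigentry notB notA rowC block_index_lt // !block_index //; case: eqP; rewrite ?mul0r.
rewrite -(big_nat_delta (fun c => vat z (N * n + c)) yN).
apply: eq_big_nat => c /andP [_ cN]; rewrite /bigentry notB notA rowC ifN; last by lia.
by rewrite addKn; case: eqP; rewrite ?mul1r ?mul0r.
Qed.

Local Open Scope ring_scope.

Definition diagblock : 'M[int]_(da + s, n + s) := block_mx A 0 C 1%:M.
Definition topblock : 'M[int]_(db, n + s) := row_mx B 0.

Lemma mul_diagblock z i :
  diagblock *m block z i = col_mx (A *m blockx z i) (C *m blockx z i + blocky z i).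
Proof. by rewrite mul_block_col mul0mx addr0 mul1mx. Qed.

Lemma mul_topblock z i : topblock *m block z i = B *m blockx z i.
Proof. by rewrite mul_row_col mul0mx addr0. Qed.

Lemma bigmx_kernel z : BM *m z = 0 <->
  (forall i, (i < N)%N -> diagblock *m block z i = 0) /\
  \sum_(0 <= i < N) topblock *m block z i = 0.
Proof.
have diagE i : (diagblock *m block z i == 0) =
    (A *m blockx z i == 0) && (C *m blockx z i + blocky z i == 0)%R.
  by rewrite mul_diagblock col_mx_eq0.
under eq_bigr do rewrite mul_topblock.
split=> [BM0|[diag0 top0]].
  split; last by apply: vat_eq => r rdb; rewrite -vat_bigmx_top // BM0 !vat0.
  move=> i iN; apply/eqP; rewrite diagE; apply/andP; split; apply/eqP; apply: vat_eq => t tlt.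
    have := vat_bigmx_A z (block_index_lt iN tlt).
    by rewrite !block_index // BM0 !vat0 => /esym.
  have := vat_bigmx_C z (block_index_lt iN tlt).
  by rewrite !block_index // BM0 !vat0 => /esym.
apply: vat_eq => r rlt; rewrite vat0.
have [rdb|dbr] := ltnP r db; first by rewrite vat_bigmx_top // top0 vat0.
have [rA|Ar] := ltnP (r - db) (N * da)%N.
  have iN : ((r - db) %/ da < N)%N by rewrite ltn_divLR; nia.
  have /eqP := diag0 _ iN; rewrite diagE => /andP [/eqP A0 _].
  by rewrite -(subnKC dbr) vat_bigmx_A // A0 vat0.
have yN : (r - db - N * da < N * s)%N by lia.
have iN : ((r - db - N * da) %/ s < N)%N by rewrite ltn_divLR; nia.
have /eqP := diag0 _ iN; rewrite diagE => /andP [_ /eqP C0].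
have -> : r = (db + N * da + (r - db - N * da))%N by lia.
by rewrite vat_bigmx_C // C0 vat0.
Qed.

End BigMatrix.

(** * The Graver complexity bound *)

Section Masks.
Variable X : Type.
Implicit Types (r : seq X) (msk : bitseq).

Lemma big_mask_compl (V : nmodType) r msk (P : pred X) (F : X -> V) : size msk = size r ->
  \sum_(x <- mask msk r | P x) F x + \sum_(x <- mask (map negb msk) r | P x) F x =
  \sum_(x <- r | P x) F x.
Proof.
elim: r msk => [|y r IHr] [|b msk] //= sz; first by rewrite !big_nil addr0.
case: sz => sz; case: b; rewrite /= !big_cons -(IHr msk sz); case: (P y) => //.
  by rewrite addrA.
by rewrite addrCA.
Qed.

Lemma count_mask_compl r msk (P : pred X) : size msk = size r ->
  (count P (mask msk r) + count P (mask (map negb msk) r))%N = count P r.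
Proof. by move=> sz; rewrite -!sum1_count; apply: big_mask_compl. Qed.

End Masks.

Lemma mask_with_counts (X Y : eqType) (key : X -> Y) (r : seq X) (mu : Y -> nat) :
  (forall y, mu y <= count (fun x => key x == y) r)%N ->
  exists2 msk, size msk = size r & forall y, count (fun x => key x == y) (mask msk r) = mu y.
Proof.
elim: r mu => [|x r IHr] mu le_mu.
  by exists [::] => // y; apply/eqP; rewrite eq_sym -leqn0 le_mu.
have [mu0|mu_pos] := posnP (mu (key x)).
  have [|msk sz Hmsk] := IHr mu; last by exists (false :: msk); rewrite /= ?sz.
  by move=> y; have := le_mu y; rewrite /=; case: eqP => [<-|]; rewrite ?mu0.
pose mu' y := if y == key x then (mu y).-1 else mu y.
have [|msk sz Hmsk] := IHr mu'.
  by move=> y; have := le_mu y; rewrite /mu' /= eq_sym; case: eqP => [->|]; lia.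
exists (true :: msk) => [|y]; first by rewrite /= sz.
by rewrite /= Hmsk /mu' eq_sym; case: eqP => [->|]; lia.
Qed.

Section Counts.
Variables (k : nat) (GL : seq 'cV[int]_k).
Hypothesis GL_uniq : uniq GL.
Local Notation M := (size GL).

Definition counts (l : seq 'cV[int]_k) : 'cV[int]_M := \col_q (count_mem GL`_q l)%:Z.

Definition gl_mx : 'M[int]_(k, M) := \matrix_(j, q) GL`_q j ord0.

Lemma big_gl_delta (V : nmodType) (F : nat -> V) x : x \in GL ->
  \sum_(q < M) (if x == GL`_q then F q else 0) = F (index x GL).
Proof.
move=> xGL; rewrite -(big_mkord xpredT (fun q => if x == GL`_q then F q else 0)).
rewrite -(big_nat_delta F (_ : (index x GL < M)%N)) ?index_mem //.
apply: eq_big_nat => q /andP [_ qM]; congr (if _ then _ else _); apply/eqP/eqP => [->|->].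
  by rewrite index_uniq.
by rewrite nth_index.
Qed.

Lemma counts_cons x l : counts (x :: l) = counts [:: x] + counts l.
Proof. by apply/matrixP => q j; rewrite !mxE /= addn0 PoszD. Qed.

Lemma gl_mx_counts l : {subset l <= GL} -> gl_mx *m counts l = \sum_(x <- l) x.
Proof.
elim: l => [|x l IHl] lGL.
  by rewrite big_nil; apply/matrixP => j j0; rewrite !mxE big1 // => q _; rewrite !mxE mulr0.
rewrite counts_cons mulmxDr big_cons IHl => [|y yl]; last by apply: lGL; rewrite inE yl orbT.
congr (_ + _); apply/matrixP => j j0; rewrite ord1 mxE.
have xGL := lGL x (mem_head x l).
rewrite -[in RHS](nth_index 0 xGL) -(big_gl_delta (fun q => GL`_q j ord0) xGL).
by apply: eq_bigr => q _; rewrite !mxE /= addn0; case: eqP; rewrite ?mulr1 ?mulr0.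
Qed.

Lemma norm1_counts l : {subset l <= GL} -> norm1 (counts l) = size l.
Proof.
elim: l => [|x l IHl] lGL; first by rewrite /norm1 big1 // => q _; rewrite mxE.
rewrite /= -IHl => [|y yl]; last by apply: lGL; rewrite inE yl orbT.
have x1 : (\sum_(q < M) (x == nth 0%R GL q))%N = 1%N.
  rewrite (eq_bigr (fun q : 'I_M => if x == GL`_q then 1%N else 0%N)) => [|q _]; last by case: eqP.
  exact: (big_gl_delta (fun=> 1%N) (lGL x (mem_head x l))).
suff -> : norm1 (counts (x :: l)) = (\sum_(q < M) (x == nth 0%R GL q) + norm1 (counts l))%N.
  by rewrite x1.
by rewrite /norm1 -big_split; apply: eq_bigr => q _; rewrite !mxE /=; case: eqP.
Qed.

End Counts.

Section Atoms.
Variables (da db s n : nat) (A : 'M[int]_(da, n)) (B : 'M[int]_(db, n)) (C : 'M[int]_(s, n)).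
Variable N : nat.
Local Notation D := (diagblock A C).
Local Notation Bt := (topblock s B).
Local Notation vec := 'cV[int]_(n + s).
Local Notation atom p := (inblock N p.1 p.2).

Lemma block_sum_atoms (T : seq (nat * vec)) i : (i < N)%N ->
  block (\sum_(p <- T) atom p) i = \sum_(p <- T) (if p.1 == i then p.2 else 0).
Proof. by move=> iN; rewrite -unblock_sum blockK. Qed.

Lemma bigmx_mul_atoms (T : seq (nat * vec)) :
  (forall p, p \in T -> (p.1 < N)%N /\ D *m p.2 = 0) ->
  bigmx A B C N *m \sum_(p <- T) atom p = 0 <-> Bt *m \sum_(p <- T) p.2 = 0.
Proof.
move=> HT; rewrite bigmx_kernel.
suff -> : \sum_(0 <= i < N) Bt *m block (\sum_(p <- T) atom p) i = Bt *m \sum_(p <- T) p.2.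
  split=> [[]//|top0]; split=> // i iN.
  rewrite block_sum_atoms // mulmx_sumr big_seq big1 // => p /HT [_ Dp].
  by case: eqP; rewrite ?Dp ?mulmx0.
rewrite -mulmx_sumr; congr (_ *m _).
rewrite (eq_big_nat _ _ (F2 := fun i => \sum_(p <- T) (if p.1 == i then p.2 else 0))); last first.
  by move=> i /andP [_ iN]; rewrite block_sum_atoms.
rewrite exchange_big /= big_seq [RHS]big_seq; apply: eq_bigr => p /HT [pN _].
rewrite -[in RHS](big_nat_delta (fun=> p.2) pN); apply: eq_bigr => i _.
by rewrite eq_sym.
Qed.

Lemma bigmx_kernel_atoms z : bigmx A B C N *m z = 0 ->
  exists2 T : seq (nat * vec),
    forall p, p \in T -> [/\ (p.1 < N)%N, conf_minimal D p.2 & confv p.2 (block z p.1)]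
    & z = \sum_(p <- T) atom p.
Proof.
move=> /bigmx_kernel [diag0 _].
suff [T HT ET] : exists2 T : seq (nat * vec),
    forall p, p \in T -> [/\ (p.1 < N)%N, conf_minimal D p.2 & confv p.2 (block z p.1)]
    & \sum_(0 <= i < N) inblock N i (block z i) = \sum_(p <- T) atom p.
  by exists T; rewrite // -ET -sum_inblock.
have: all (fun i => i < N)%N (index_iota 0 N) by apply/allP => i; rewrite mem_index_iota.
elim: (index_iota 0 N) => [_|i r IHr /= /andP [iN /IHr [T HT ET]]].
  by exists [::]; rewrite ?big_nil.
have [L HL EL] := conf_decomposition (diag0 i iN).
exists ([seq (i, x) | x <- L] ++ T).
  by move=> p; rewrite mem_cat => /orP [/mapP [x /HL [xmin xz] ->]|/HT].
by rewrite big_cons big_cat /= big_map ET {1}EL inblock_sum.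
Qed.

End Atoms.

Section GraverComplexity.
Variables (da db s n : nat) (A : 'M[int]_(da, n)) (B : 'M[int]_(db, n)) (C : 'M[int]_(s, n)).
Local Notation D := (diagblock A C).
Local Notation Bt := (topblock s B).
Local Notation vec := 'cV[int]_(n + s).
Variable GL : seq vec.
Hypothesis GL_uniq : uniq GL.
Hypothesis GL_graver : forall x, conf_minimal D x -> x \in GL.
Local Notation F := (Bt *m gl_mx GL).

Section OneElement.
Variables (N : nat) (z : 'cV[int]_(N * n + N * s)) (T : seq (nat * vec)).
Hypothesis z_min : conf_minimal (bigmx A B C N) z.
Hypothesis T_atoms :
  forall p, p \in T -> [/\ (p.1 < N)%N, conf_minimal D p.2 & confv p.2 (block z p.1)].
Hypothesis z_atoms : z = \sum_(p <- T) inblock N p.1 p.2.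
Local Notation atom p := (inblock N p.1 p.2).
Local Notation sub msk := (\sum_(p <- mask msk T) atom p).
Local Notation sigma := (fun i => 0 <= z i ord0).

Lemma atom_orthant p : p \in T -> in_orthant sigma (atom p).
Proof.
move=> /T_atoms [pN _ pz]; apply: in_orthant_conf (in_orthant_sign z) _.
by apply: confv_unblock => i iN; case: eqP => [<- //|_]; apply: confv0l.
Qed.

Lemma atom_neq0 p : p \in T -> atom p != 0.
Proof.
move=> /T_atoms [pN [p0 _ _] _]; apply: contraNneq p0 => a0.
by have := @block_inblock n s N p.1 p.1 p.2 pN; rewrite eqxx a0 block0 // => <-.
Qed.

Lemma mask_atoms_orthant msk p : p \in mask msk T -> in_orthant sigma (atom p).
Proof. by move/mem_mask; apply: atom_orthant. Qed.

Lemma sub_conf msk : size msk = size T -> confv (sub msk) z.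
Proof.
move=> sz; rewrite [X in confv _ X]z_atoms -(big_mask_compl _ _ sz).
by apply: (confv_addr (sigma := sigma)); apply: in_orthant_sum => p /mask_atoms_orthant.
Qed.

Lemma sub_neq0 msk p : p \in mask msk T -> sub msk != 0.
Proof.
move=> pm; apply: (sum_orthant_neq0 (@mask_atoms_orthant msk) pm).
by apply: atom_neq0; apply: mem_mask pm.
Qed.

Lemma atoms_in_GL (T' : seq (nat * vec)) : {subset T' <= T} -> {subset map snd T' <= GL}.
Proof. by move=> T'T _ /mapP [p /T'T /T_atoms [_ /GL_graver ? _] ->]. Qed.

Lemma atoms_kernel (T' : seq (nat * vec)) : {subset T' <= T} ->
  bigmx A B C N *m \sum_(p <- T') atom p = 0 <-> F *m counts GL (map snd T') = 0.
Proof.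
move=> T'T; rewrite -mulmxA gl_mx_counts //; last exact: atoms_in_GL.
rewrite big_map.
by apply: bigmx_mul_atoms => p /T'T /T_atoms [? [_ ? _] _].
Qed.

Lemma mask_of_conf u : confv u (counts GL (map snd T)) ->
  exists2 msk, size msk = size T & counts GL (map snd (mask msk T)) = u.
Proof.
set c := counts GL (map snd T) => uc.
have c_ge0 q : 0 <= vat c q.
  by case: (ltnP q (size GL)) => qM; [rewrite (vatE _ (Ordinal qM)) mxE | rewrite vatN].
have u_ge0 q : 0 <= vat u q by have := confv_vat q uc; have := c_ge0 q; rewrite /conf; lia.
pose mu (y : vec) := `|vat u (index y GL)|%N.
have [msk sz mask_mu] : exists2 msk, size msk = size T &
    forall y, count (fun p => p.2 == y) (mask msk T) = mu y.
  apply: mask_with_counts => y; rewrite /mu.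
  case: (ltnP (index y GL) (size GL)) => [yM|]; last by move=> ?; rewrite vatN.
  have cy : vat c (index y GL) = (count (fun p => p.2 == y) T)%:Z.
    by rewrite (vatE c (Ordinal yM)) mxE nth_index -?index_mem // count_map.
  have := confv_vat (index y GL) uc; have := u_ge0 (index y GL); rewrite cy /conf.
  by move: (vat u _) (count _ T) => a b; lia.
exists msk => //; apply: vat_eq => q qM; rewrite (vatE _ (Ordinal qM)) mxE count_map.
by rewrite [count _ _]mask_mu /mu index_uniq // gez0_abs.
Qed.

(* The sub-multiset of atoms selected by u sums to a nonzero kernel element of the big
   matrix conformal to z, hence to z itself; the remaining atoms then sum to 0, so none
   are left and u = c. *)
Lemma counts_conf_minimal : conf_minimal F (counts GL (map snd T)).
Proof.
have [z0 Mz zmin] := z_min.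
have TGL := @atoms_in_GL T (fun p pT => pT).
split.
- apply: contraNneq z0 => c0; move: (norm1_counts GL_uniq TGL).
  rewrite c0 /norm1 big1 => [/esym/eqP|i _]; last by rewrite mxE.
  by rewrite size_map size_eq0 z_atoms => /eqP ->; rewrite big_nil.
- by apply/(atoms_kernel (fun p pT => pT)); rewrite -z_atoms.
move=> u Fu u0 /mask_of_conf [msk sz sub_u].
have sub_z : sub msk = z.
  have msk_sub : {subset mask msk T <= T} by move=> p /mem_mask.
  apply: zmin; [by apply/(atoms_kernel msk_sub); rewrite sub_u | | exact: sub_conf].
  suff [p pm] : exists p, p \in mask msk T by apply: sub_neq0 pm.
  case E: (mask msk T) => [|p r]; last by exists p; rewrite mem_head.
  by move/eqP: u0; rewrite -sub_u E => [[]]; apply/matrixP => i j; rewrite !mxE.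
have compl0 : mask (map negb msk) T = [::].
  case E: (mask (map negb msk) T) => [//|p r].
  have pm : p \in mask (map negb msk) T by rewrite E mem_head.
  have /eqP [] := sub_neq0 pm.
  have zsplit : sub msk + sub (map negb msk) = z by rewrite z_atoms -(big_mask_compl _ _ sz).
  by apply: (addrI z); rewrite addr0 -{1}sub_z.
apply/esym; rewrite -sub_u; apply/matrixP => q j; rewrite !mxE !count_map.
by rewrite -(count_mask_compl _ sz) compl0 addn0.
Qed.

End OneElement.

Lemma graver_bigmx_atoms : exists g : nat,
  forall N (z : 'cV[int]_(N * n + N * s)), graver (bigmx A B C N) z ->
  exists2 T : seq (nat * vec), (size T <= g)%N &
    (forall p, p \in T -> (p.1 < N)%N /\ p.2 \in GL) /\ z = \sum_(p <- T) inblock N p.1 p.2.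
Proof.
have [GF HGF] := conf_minimal_finite F.
exists (\max_(c <- GF) norm1 c)%N => N z /graverP zmin; have [_ Mz _] := zmin.
have [T HT ET] := bigmx_kernel_atoms Mz.
exists T; last by split=> // p /[dup] /HT [pN /GL_graver pGL _].
have /HGF cGF := counts_conf_minimal zmin HT ET.
rewrite -(size_map snd) -(norm1_counts GL_uniq) => [|_ /mapP [p /HT [_ /GL_graver ? _] ->] //].
exact: leq_bigmax_seq.
Qed.

End GraverComplexity.

(** * Counting the candidates *)

Definition maxabs m (x : 'cV[int]_m) : nat := (\max_(j < m) `|x j ord0|)%N.

Lemma vat_maxabs m (x : 'cV[int]_m) j : (`|vat x j| <= maxabs x)%N.
Proof.
case: (ltnP j m) => jm; last by rewrite vatN.
rewrite (vatE _ (Ordinal jm)).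
exact: (@leq_bigmax _ (fun j : 'I_m => `|x j ord0|%N) (Ordinal jm)).
Qed.

Lemma inblock_maxabs n s N i (x : 'cV[int]_(n + s)) c :
  (`|inblock N i x c ord0| <= maxabs x)%N.
Proof. by rewrite mxE; case: ifP => _; case: eqP => _; rewrite ?vat0 ?vat_maxabs. Qed.

Lemma sum_le_size_mul (T : eqType) (r : seq T) (F : T -> nat) b :
  (forall x, x \in r -> F x <= b)%N -> (\sum_(x <- r) F x <= size r * b)%N.
Proof.
move=> Fb; elim: r Fb => [|x r IHr] Fb; first by rewrite big_nil.
rewrite big_cons mulSn leq_add ?Fb ?mem_head // IHr // => y yr.
by rewrite Fb // inE yr orbT.
Qed.

Lemma abs_sum_le (I : Type) (r : seq I) (F : I -> int) b :
  (forall i, `|F i| <= b)%N -> (absz (\sum_(i <- r) F i)%R <= size r * b)%N.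
Proof.
move=> Fb; elim: r => [|i r IHr]; first by rewrite big_nil.
rewrite big_cons /= mulSn; have := Fb i; move: IHr.
by set S := (\sum_(j <- r) F j)%R; clearbody S; move: (F i) => a; lia.
Qed.

Lemma enc_vec_le k (z : 'cV[int]_k) b :
  (forall c, `|z c ord0| <= b)%N -> (enc_vec z <= k * (1 + up_log 2 b.+1))%N.
Proof.
move=> zb; rewrite -[k in (k * _)%N]card_ord -sum_nat_const; apply: leq_sum => c _.
by rewrite leq_add2l; apply: leq_up_log; rewrite ltnS.
Qed.

Section Candidates.
Variables (n s N g : nat) (GL : seq 'cV[int]_(n + s)).
Local Notation vec := 'cV[int]_(n + s).

(* The zero vector in [0 :: GL] pads sums of fewer than g atoms. *)
Definition atom_pool : seq (nat * vec) := [seq (i, x) | i <- iota 0 N, x <- 0 :: GL].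
Local Notation pool_at q := (nth (0%N, 0) atom_pool q).

Definition candidates : seq 'cV[int]_(N * n + N * s) :=
  [seq \sum_(t < g) inblock N (pool_at (f t)).1 (pool_at (f t)).2
  | f : {ffun 'I_g -> 'I_(size atom_pool)}].

Lemma size_candidates : size candidates = ((N * (size GL).+1) ^ g)%N.
Proof. by rewrite size_map -cardE card_ffun !card_ord size_allpairs size_iota. Qed.

Lemma candidates_maxabs z c : z \in candidates ->
  (`|z c ord0| <= g * \max_(x <- GL) maxabs x)%N.
Proof.
move=> /mapP [f _ ->]; rewrite summxE.
apply: (@leq_trans (size (index_enum 'I_g) * \max_(x <- GL) maxabs x)); last first.
  by rewrite /index_enum -enumT size_enum_ord.
apply: abs_sum_le => t.
apply: leq_trans (inblock_maxabs _ _ _) _.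
have /allpairsP [[i x] [_ /= xGL ->]] := mem_nth (0%N, 0) (ltn_ord (f t)).
move: xGL; rewrite inE => /orP [/eqP ->|xGL].
  by rewrite /maxabs big1 // => j _; rewrite mxE.
exact: leq_bigmax_seq.
Qed.

Lemma enc_vec_candidates z : z \in candidates ->
  (enc_vec z <= (N * n + N * s) * (1 + up_log 2 (g * \max_(x <- GL) maxabs x).+1))%N.
Proof. by move=> zc; apply: enc_vec_le => c; apply: candidates_maxabs zc. Qed.

Lemma mem_candidates (T : seq (nat * vec)) : (0 < N)%N -> (size T <= g)%N ->
  (forall p, p \in T -> (p.1 < N)%N /\ p.2 \in GL) ->
  \sum_(p <- T) inblock N p.1 p.2 \in candidates.
Proof.
move=> N_gt0 Tg HT; pose T' := T ++ nseq (g - size T) (0%N, 0).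
have T'pool : {subset T' <= atom_pool}.
  move=> p; rewrite mem_cat mem_nseq => /orP [/HT [pN pGL]|/andP [_ /eqP ->]].
    by case: p pN pGL => i x /= iN xGL; apply: allpairs_f; rewrite ?mem_iota ?inE ?xGL ?orbT.
  by apply: allpairs_f; rewrite ?mem_iota ?inE ?eqxx.
have pool_gt0 : (0 < size atom_pool)%N by rewrite size_allpairs size_iota muln_gt0 N_gt0.
pose f := [ffun t : 'I_g => insubd (Ordinal pool_gt0) (index (nth (0%N, 0) T' t) atom_pool)].
apply/mapP; exists f; first by rewrite mem_enum.
have size_T' : size T' = g by rewrite size_cat size_nseq subnKC.
have -> : \sum_(p <- T) inblock N p.1 p.2 = \sum_(p <- T') inblock N p.1 p.2.
  rewrite big_cat /= [X in _ = _ + X]big1_seq ?addr0 // => p /andP [_].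
  by rewrite mem_nseq => /andP [_ /eqP ->]; apply: inblock0.
rewrite (big_nth (0%N, 0)) size_T' big_mkord; apply: eq_bigr => t _.
have t_pool : nth (0%N, 0) T' t \in atom_pool by apply/T'pool/mem_nth; rewrite size_T'.
by rewrite ffunE insubdK ?nth_index // unfold_in index_mem.
Qed.

End Candidates.

Definition asbool (P : Prop) : bool := if excluded_middle_informative P then true else false.

Lemma asboolP (P : Prop) : reflect P (asbool P).
Proof. by rewrite /asbool; case: excluded_middle_informative => h; constructor. Qed.

Theorem lemma2 (da db s n : nat) (A : 'M[int]_(da, n)) (B : 'M[int]_(db, n))
  (C : 'M[int]_(s, n)) :
  exists c e : nat, forall N : nat, (0 < N)%N ->
    exists G : seq 'cV[int]_(N * n + N * s),
      uniq G /\
      (forall z, z \in G <-> graver (bigmx A B C N) z) /\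
      (\sum_(g <- G) enc_vec g <= c * N ^ e)%N.
Proof.
have [GL GL_uniq GL_graver] := finite_pred_uniq (conf_minimal_finite (diagblock A C)).
have [g Hg] := graver_bigmx_atoms B GL_uniq GL_graver.
pose E := (1 + up_log 2 (g * \max_(x <- GL) maxabs x).+1)%N.
exists ((size GL).+1 ^ g * (n + s) * E)%N, g.+1 => N N_gt0.
set cands := candidates N g GL.
set G := [seq z <- undup cands | asbool (graver (bigmx A B C N) z)].
have memG z : z \in G = asbool (graver (bigmx A B C N) z) && (z \in cands).
  by rewrite mem_filter mem_undup.
exists G; split; first by rewrite filter_uniq ?undup_uniq.
split=> [z|].
  rewrite memG; split=> [/andP [/asboolP //]|zG]; apply/andP; split; first exact/asboolP.
  by have [T Tg [HT ->]] := Hg N z zG; apply: mem_candidates.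
apply: leq_trans (sum_le_size_mul (b := (N * n + N * s) * E) _) _ => [z|].
  by rewrite memG => /andP [_ /enc_vec_candidates].
have sizeG : (size G <= size cands)%N.
  by rewrite size_filter (leq_trans (count_size _ _)) ?size_undup.
apply: leq_trans (leq_mul sizeG (leqnn _)) _.
rewrite size_candidates expnMn expnS -mulnDr.
by move: (N ^ g)%N ((size GL).+1 ^ g)%N => a b; lia.
Qed.
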